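(* Let $A$ be a synaptic algebra and $p,q\in P$. With $r_p:=p\wedge(p^{\perp}\vee q)\wedge(p^{\perp}\vee q^{\perp})$, $r_{p^{\perp}}:=p^{\perp}\wedge(p\vee q)\wedge(p\vee q^{\perp})$, $r_q:=q\wedge(p\vee q^{\perp})\wedge(p^{\perp}\vee q^{\perp})$, $r_{q^{\perp}}:=q^{\perp}\wedge(p\vee q)\wedge(p^{\perp}\vee q)$ and $[p,q]:=(p\vee q)\wedge(p\vee q^{\perp})\wedge(p^{\perp}\vee q)\wedge(p^{\perp}\vee q^{\perp})$: (i) $r_p\perp r_{p^{\perp}}$ and $r_q\perp r_{q^{\perp}}$; (ii) $1=(p\wedge q)\oplus(p\wedge q^{\perp})\oplus(p^{\perp}\wedge q)\oplus(p^{\perp}\wedge q^{\perp})\oplus r_p\oplus r_{p^{\perp}}=[p,q]^{\perp}\oplus r_p\oplus r_{p^{\perp}}$; (iii) $1=(p\wedge q)\oplus(p\wedge q^{\perp})\oplus(p^{\perp}\wedge q)\oplus(p^{\perp}\wedge q^{\perp})\oplus r_q\oplus r_{q^{\perp}}=[p,q]^{\perp}\oplus r_q\oplus r_{q^{\perp}}$; (iv) $r_p\oplus r_{p^{\perp}}=r_q\oplus r_{q^{\perp}}=[p,q]$.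
   Context: Synaptic algebra (Foulis): $R$ is a real linear associative algebra with unit $1$, and $A\subseteq R$ is a real linear subspace with $1\in A$. For $a,b\in A$ write $aCb$ iff $ab=ba$; $C(a):=\{b\in A: aCb\}$; $CC(a):=\{b\in A: bCd \text{ for all } d\in C(a)\}$. $A$ is a synaptic algebra with enveloping algebra $R$ iff: (SA1) $A$ is a partially ordered archimedean real linear space with positive cone $A^+$, $1$ is an order unit, $\|\cdot\|$ the order-unit norm; (SA2) $a\in A\Rightarrow a^2\in A^+$; (SA3) $a,b\in A^+\Rightarrow aba\in A^+$; (SA4) if $a\in A$, $b\in A^+$, $aba=0$ then $ab=ba=0$; (SA5) if $a\in A^+$ there is $b\in A^+\cap CC(a)$ with $b^2=a$; (SA6) for $a\in A$ there is $p=p^2\in A$ with $ab=0\Leftrightarrow pb=0$ for all $b\in A$; (SA7) if $1\le a$ there is $b\in A$ with $ab=ba=1$; (SA8) if $a,b\in A$, $a_1\le a_2\le\cdots$ are pairwise commuting elements of $C(b)$ with $\|a-a_n\|\to0$, then $a\in C(b)$. $A$ is nondegenerate. $P:=\{p\in A:p=p^2\}$ with the order inherited from $A$ is an orthomodular lattice with orthocomplement $p^{\perp}:=1-p$, meet $\wedge$, join $\vee$. $p\perp q$ means $p\le q^{\perp}$; for pairwise orthogonal projections the orthosum $\oplus$ is their sum. *)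

From HB Require Import structures.
From mathcomp Require Import all_boot all_order all_algebra.
From mathcomp Require Import boolp classical_sets reals.
Set Implicit Arguments. Unset Strict Implicit. Unset Printing Implicit Defensive.
Import Order.TTheory GRing.Theory Num.Theory.
Local Open Scope ring_scope.
Local Open Scope classical_set_scope.

Section Synaptic.
Variables (K : realType) (R : algType K).
(* A : the carrier subspace of the enveloping algebra R;
   Apos : the positive cone A^+ *)
Variables (A Apos : set R).

Definition Ale (a b : R) : Prop := Apos (b - a).

Definition Comm (a : R) : set R := [set b | A b /\ a * b = b * a].
Definition DComm (a : R) : set R :=
  [set b | A b /\ forall d, Comm a d -> b * d = d * b].

Definition ounorm (a : R) : K :=
  inf [set l : K | 0 <= l /\ Ale (- (l *: 1)) a /\ Ale a (l *: 1)].

Record synaptic_algebra : Prop := {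
  sa_sub0 : A 0;
  sa_sub1 : A 1;
  sa_subD : forall a b, A a -> A b -> A (a + b);
  sa_subZ : forall (l : K) a, A a -> A (l *: a);
  sa_pos_sub : forall a, Apos a -> A a;
  sa_pos0 : Apos 0;
  sa_posD : forall a b, Apos a -> Apos b -> Apos (a + b);
  sa_posZ : forall (l : K) a, 0 <= l -> Apos a -> Apos (l *: a);
  sa_pos_anti : forall a, Apos a -> Apos (- a) -> a = 0;
  sa_archi : forall a b, A a -> A b ->
    (forall n : nat, Ale (n%:R *: a) b) -> Ale a 0;
  sa_unit : forall a, A a -> exists l : K, Ale (- (l *: 1)) a /\ Ale a (l *: 1);
  sa2 : forall a, A a -> Apos (a * a);
  sa3 : forall a b, Apos a -> Apos b -> Apos (a * b * a);
  sa4 : forall a b, A a -> Apos b -> a * b * a = 0 -> a * b = 0 /\ b * a = 0;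
  sa5 : forall a, Apos a -> exists b, Apos b /\ DComm a b /\ b * b = a;
  sa6 : forall a, A a -> exists p, A p /\ p * p = p /\
          (forall b, A b -> (a * b = 0 <-> p * b = 0));
  sa7 : forall a, A a -> Ale 1 a -> exists b, A b /\ a * b = 1 /\ b * a = 1;
  sa8 : forall a b (s : nat -> R), A a -> A b ->
    (forall n, Comm b (s n)) ->
    (forall m n, s m * s n = s n * s m) ->
    (forall n, Ale (s n) (s n.+1)) ->
    (forall e : K, 0 < e -> exists N, forall n, (N <= n)%N -> ounorm (a - s n) < e) ->
    Comm b a;
  sa_nondeg : (1 : R) <> 0
}.

Definition proj (p : R) : Prop := A p /\ p * p = p.

Definition pperp (p : R) : R := 1 - p.
Definition porth (p q : R) : Prop := Ale p (pperp q).

Definition is_pmeet (p q m : R) : Prop :=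
  proj m /\ Ale m p /\ Ale m q /\
  forall x, proj x -> Ale x p -> Ale x q -> Ale x m.
Definition is_pjoin (p q j : R) : Prop :=
  proj j /\ Ale p j /\ Ale q j /\
  forall x, proj x -> Ale p x -> Ale q x -> Ale j x.
Definition pmeet (p q : R) : R := xget 0 (is_pmeet p q).
Definition pjoin (p q : R) : R := xget 0 (is_pjoin p q).

End Synaptic.

From mathcomp Require Import all_boot all_algebra.
From mathcomp Require Import boolp classical_sets reals.
Import GRing.Theory.
Set Implicit Arguments. Unset Strict Implicit.
Local Open Scope ring_scope.

(* For projections, e <= f means e f = e and e _|_ f means e f = 0.  Joins exist
   as the carrier projection of e + f (SA6), and meets by complementation.
   Writing x' = 1 - x, the four corners a1 = p /\ q, a2 = p /\ q', a3 = p' /\ q,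
   a4 = p' /\ q' are pairwise orthogonal and each join occurring in [p,q] is the
   complement of one of them, so [p,q] = 1 - (a1 + a2 + a3 + a4).  Removing the
   two corners below p from p gives r_p = p - (a1 + a2), and likewise
   r_p' = p' - (a3 + a4), whence r_p + r_p' = [p,q]; the same holds for q.
   Every orthogonality claim then follows from one observation: positive
   elements summing to 1 are pairwise orthogonal, because x _|_ y means that
   1 - x - y, the sum of the others, is positive. *)

Section SynapticProjections.
Variables (K : realType) (R : algType K) (A Apos : set R).
Hypothesis HA : synaptic_algebra A Apos.

Local Notation "x <=A y" := (Ale Apos x y) (at level 70).
Local Notation "x ⟂ y" := (porth Apos x y) (at level 70).
Local Notation proj := (proj A).
Local Notation meet := (pmeet A Apos).
Local Notation join := (pjoin A Apos).

Lemma pperpK e : pperp (pperp e) = e :> R.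
Proof. by rewrite /pperp subKr. Qed.

Lemma Ale_refl x : x <=A x.
Proof. by rewrite /Ale subrr; exact: sa_pos0 HA. Qed.

Lemma Ale_trans x y z : x <=A y -> y <=A z -> x <=A z.
Proof. by rewrite /Ale => xy yz; have := sa_posD HA yz xy; rewrite addrA subrK. Qed.

Lemma Ale_anti x y : x <=A y -> y <=A x -> x = y.
Proof. by move=> xy yx; apply/esym/subr0_eq/(sa_pos_anti HA); rewrite ?opprB. Qed.

Lemma Ale_addr x y : Apos y -> x <=A x + y.
Proof. by rewrite /Ale addrAC subrr add0r. Qed.

Lemma Ale_pperp x y : x <=A y -> pperp y <=A pperp x.
Proof. by rewrite /Ale /pperp => xy; rewrite opprB addrC addrA subrK. Qed.

Lemma porth_sym x y : x ⟂ y -> y ⟂ x.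
Proof. by move/Ale_pperp; rewrite pperpK. Qed.

Lemma porth_of_le_pperp x y e : x <=A e -> y <=A pperp e -> x ⟂ y.
Proof. by move=> xe /Ale_pperp; rewrite pperpK; exact: Ale_trans. Qed.

Lemma pos_add_eq0 x y : Apos x -> Apos y -> x + y = 0 -> x = 0.
Proof. by move=> Px Py /addr0_eq xE; apply: (sa_pos_anti HA); rewrite ?xE. Qed.

Lemma sa_subB a b : A a -> A b -> A (a - b).
Proof.
by move=> Aa Ab; apply: (sa_subD HA Aa); rewrite -scaleN1r; exact: (sa_subZ HA).
Qed.

Lemma proj_pperp e : proj e -> proj (pperp e).
Proof.
move=> [Ae ee]; split; first exact: sa_subB (sa_sub1 HA) Ae.
by rewrite /pperp mulrBl mul1r mulrBr mulr1 ee subrr subr0.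
Qed.

Lemma proj_pos e : proj e -> Apos e.
Proof. by move=> [Ae ee]; rewrite -ee; exact: (sa2 HA). Qed.

Lemma proj_mulC_id e f : proj e -> proj f -> e * f = e -> f * e = e.
Proof.
move=> pe pf ef.
have ef' : e * pperp f = 0 by rewrite /pperp mulrBr mulr1 ef subrr.
have : pperp f * e * pperp f = 0 by rewrite -mulrA ef' mulr0.
case/(sa4 HA (proj_pperp pf).1 (proj_pos pe)) => f'e _.
by apply/esym/subr0_eq; rewrite -f'e /pperp mulrBl mul1r.
Qed.

Lemma proj_leP e f : proj e -> proj f -> e <=A f <-> e * f = e.
Proof.
move=> pe pf; have pf' := proj_pperp pf.
split=> [ef | ef].
- have f'f : pperp f * f = 0 by rewrite /pperp mulrBl mul1r pf.2 subrr.
  have : pperp f * e * pperp f = 0.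
    apply: (sa_pos_anti HA); first exact: (sa3 HA) (proj_pos pf') (proj_pos pe).
    have := sa3 HA (proj_pos pf') ef.
    by rewrite [pperp f * (f - e)]mulrBr f'f sub0r mulNr.
  case/(sa4 HA pf'.1 (proj_pos pe)) => _ ef'.
  by apply/esym/subr0_eq; rewrite -ef' /pperp mulrBr mulr1.
- have fe := proj_mulC_id pe pf ef.
  rewrite /Ale; have -> : f - e = (f - e) * (f - e).
    by rewrite mulrBl !mulrBr pf.2 pe.2 ef fe subrr subr0.
  exact: (sa2 HA) (sa_subB pf.1 pe.1).
Qed.

Lemma proj_porthP e f : proj e -> proj f -> e ⟂ f <-> e * f = 0.
Proof.
move=> pe pf; have pf' := proj_pperp pf.
split=> [/(proj_leP pe pf') | ef0].
  rewrite /pperp mulrBr mulr1 => /eqP.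
  by rewrite subr_eq addrC -subr_eq subrr eq_sym => /eqP.
by apply/(proj_leP pe pf'); rewrite /pperp mulrBr mulr1 ef0 subr0.
Qed.

Lemma proj_add e f : proj e -> proj f -> e ⟂ f -> proj (e + f).
Proof.
move=> pe pf ef; have /(proj_porthP pf pe) fe := porth_sym ef.
move/(proj_porthP pe pf): ef => ef.
split; first exact: (sa_subD HA) pe.1 pf.1.
by rewrite mulrDl !mulrDr pe.2 pf.2 ef fe addr0 add0r.
Qed.

Lemma porth_addl e f g : proj e -> proj f -> proj g ->
  e ⟂ f -> e ⟂ g -> f ⟂ g -> e + f ⟂ g.
Proof.
move=> pe pf pg ef /(proj_porthP pe pg) eg /(proj_porthP pf pg) fg.
by apply/(proj_porthP (proj_add pe pf ef) pg); rewrite mulrDl eg fg addr0.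
Qed.

Lemma pmeet_eq e f m : is_pmeet A Apos e f m -> meet e f = m.
Proof.
move=> Hm; have : is_pmeet A Apos e f (meet e f) := xgetI 0 Hm.
case: Hm => pm [me [mf glb]] [px [xe [xf glbx]]].
by apply: Ale_anti; [exact: glb | exact: glbx].
Qed.

Lemma pjoin_eq e f j : is_pjoin A Apos e f j -> join e f = j.
Proof.
move=> Hj; have : is_pjoin A Apos e f (join e f) := xgetI 0 Hj.
case: Hj => pj [ej [fj lub]] [px [ex [fx lubx]]].
by apply: Ale_anti; [exact: lubx | exact: lub].
Qed.

(* Also when the meet does not exist: [xget] then returns the junk value 0. *)
Lemma proj_pmeet e f : proj (meet e f).
Proof.
have [[m Hm] | none] := pselect (exists m, is_pmeet A Apos e f m).
  by have [] : is_pmeet A Apos e f (meet e f) := xgetI 0 Hm.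
rewrite /pmeet xgetPN; last by move=> m Hm; apply: none; exists m.
by split; [exact: (sa_sub0 HA) | rewrite mulr0].
Qed.

Lemma pjoin_exists e f : proj e -> proj f -> exists j, is_pjoin A Apos e f j.
Proof.
move=> pe pf.
(* The join is the projection [c] annihilating exactly what e + f annihilates. *)
have [c [Ac [cc carrier]]] := sa6 HA (sa_subD HA pe.1 pf.1).
have pc : proj c by [].
have pc' := proj_pperp pc.
have efc' : (e + f) * pperp c = 0.
  by apply/(carrier _ pc'.1); rewrite /pperp mulrBr mulr1 cc subrr.
have Pe := sa3 HA (proj_pos pc') (proj_pos pe).
have Pf := sa3 HA (proj_pos pc') (proj_pos pf).
have sum0 : pperp c * e * pperp c + pperp c * f * pperp c = 0.
  by rewrite -mulrDl -mulrDr -mulrA efc' mulr0.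
have le_c g : proj g -> pperp c * g * pperp c = 0 -> g <=A c.
  move=> pg /(sa4 HA pc'.1 (proj_pos pg)) [_ gc'].
  by rewrite -[c]pperpK; apply/(proj_porthP pg pc').
exists c; split=> //; split; first exact: le_c (pos_add_eq0 Pe Pf sum0).
split; first by apply: le_c pf _; apply: pos_add_eq0 Pf Pe _; rewrite addrC.
move=> x px ex fx; have px' := proj_pperp px.
have ex' : e * pperp x = 0 by apply/(proj_porthP pe px'); rewrite /porth pperpK.
have fx' : f * pperp x = 0 by apply/(proj_porthP pf px'); rewrite /porth pperpK.
rewrite -[x]pperpK; apply/(proj_porthP pc px'); apply/(carrier _ px'.1).
by rewrite mulrDl ex' fx' addr0.
Qed.

Lemma pjoinP e f : proj e -> proj f -> is_pjoin A Apos e f (join e f).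
Proof. by move=> pe pf; have [j Hj] := pjoin_exists pe pf; exact: (xgetI 0 Hj). Qed.

Lemma is_pmeet_pperp e f j :
  is_pjoin A Apos (pperp e) (pperp f) j -> is_pmeet A Apos e f (pperp j).
Proof.
case=> pj [ej [fj lub]]; split; first exact: proj_pperp.
split; first by rewrite -[e]pperpK; apply: Ale_pperp.
split; first by rewrite -[f]pperpK; apply: Ale_pperp.
move=> x px xe xf; rewrite -[x]pperpK; apply: Ale_pperp.
by apply: lub; [exact: proj_pperp | exact: Ale_pperp | exact: Ale_pperp].
Qed.

Lemma pmeetE e f : proj e -> proj f -> meet e f = pperp (join (pperp e) (pperp f)).
Proof.
by move=> pe pf; apply/pmeet_eq/is_pmeet_pperp/pjoinP; exact: proj_pperp.
Qed.

Lemma pmeetP e f : proj e -> proj f -> is_pmeet A Apos e f (meet e f).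
Proof.
by move=> pe pf; rewrite pmeetE //; apply/is_pmeet_pperp/pjoinP; exact: proj_pperp.
Qed.

Lemma pjoinE e f : proj e -> proj f -> join e f = pperp (meet (pperp e) (pperp f)).
Proof. by move=> pe pf; rewrite pmeetE ?pperpK //; apply: proj_pperp. Qed.

Lemma pmeetC e f : meet e f = meet f e.
Proof.
rewrite /pmeet; congr xget; apply/funext => m; apply/propext.
by split=> -[pm [m1 [m2 glb]]]; do 3!split=> //; move=> x px x1 x2; exact: glb.
Qed.

Lemma pjoinC e f : join e f = join f e.
Proof.
rewrite /pjoin; congr xget; apply/funext => j; apply/propext.
by split=> -[pj [j1 [j2 lub]]]; do 3!split=> //; move=> x px x1 x2; exact: lub.
Qed.

Lemma pjoin_porth e f : proj e -> proj f -> e ⟂ f -> join e f = e + f.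
Proof.
move=> pe pf ef; have pef := proj_add pe pf ef.
apply: pjoin_eq; split=> //; split; first exact: Ale_addr (proj_pos pf).
split; first by rewrite addrC; exact: Ale_addr (proj_pos pe).
move=> x px /(proj_leP pe px) ex /(proj_leP pf px) fx.
by apply/(proj_leP pef px); rewrite mulrDl ex fx.
Qed.

Lemma pmeet_pperp_porth e f :
  proj e -> proj f -> e ⟂ f -> meet (pperp e) (pperp f) = pperp (e + f).
Proof.
move=> pe pf ef.
by rewrite pmeetE ?pperpK ?pjoin_porth //; apply: proj_pperp.
Qed.

Lemma pmeet_pperp_le e f : proj e -> proj f -> f <=A e -> meet e (pperp f) = e - f.
Proof.
move=> pe pf /(proj_leP pf pe) fe; have ef := proj_mulC_id pf pe fe.
have pef : proj (e - f).
  split; first exact: sa_subB pe.1 pf.1.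
  by rewrite mulrBl !mulrBr pe.2 pf.2 ef fe subrr subr0.
apply: pmeet_eq; split=> //; split.
  by rewrite /Ale opprB addrC subrK; exact: proj_pos.
split.
  by rewrite /Ale /pperp opprB addrA subrK; exact: proj_pos (proj_pperp pe).
move=> x px /(proj_leP px pe) xe /(proj_porthP px pf) xf.
by apply/(proj_leP px pef); rewrite mulrBr xe xf subr0.
Qed.

Lemma pmeet_pjoin_pperp e f : proj e -> proj f ->
  meet (meet e (join (pperp e) f)) (join (pperp e) (pperp f)) =
  e - (meet e f + meet e (pperp f)).
Proof.
move=> pe pf; have pe' := proj_pperp pe; have pf' := proj_pperp pf.
have [_ [ae [af _]]] := pmeetP pe pf.
have [_ [be [bf _]]] := pmeetP pe pf'.
rewrite !pjoinE // !pperpK.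
have eb : meet e (pperp (meet e (pperp f))) = e - meet e (pperp f).
  exact: pmeet_pperp_le pe (proj_pmeet _ _) be.
have [_ [_ [_ glb]]] := pmeetP pe (proj_pperp (proj_pmeet e (pperp f))).
rewrite eb pmeet_pperp_le.
- by rewrite opprD addrA addrAC.
- by rewrite -eb; exact: proj_pmeet.
- exact: proj_pmeet.
rewrite -eb; apply: glb => //; first exact: proj_pmeet.
exact: porth_of_le_pperp af bf.
Qed.

Lemma pmeet_pjoin_pperp_sym e f : proj e -> proj f ->
  meet (meet e (join f (pperp e))) (join (pperp f) (pperp e)) =
  e - (meet f e + meet (pperp f) e).
Proof.
move=> pe pf; rewrite [join f _]pjoinC [join (pperp f) _]pjoinC.
by rewrite [meet f e]pmeetC [meet (pperp f) e]pmeetC pmeet_pjoin_pperp.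
Qed.

Lemma pos_sum (s : seq R) : {in s, forall x, Apos x} -> Apos (\sum_(x <- s) x).
Proof.
move=> Ps; rewrite big_seq; apply: (big_ind Apos) => //.
  exact: (sa_pos0 HA).
exact: (sa_posD HA).
Qed.

Lemma pairwise_porth_of_sum (s : seq R) : {in s, forall x, Apos x} ->
  \sum_(x <- s) x <=A 1 -> pairwise (fun x y => `[< x ⟂ y >]) s.
Proof.
elim: s => // x s IH /forall_cons[Px Ps]; rewrite big_cons => sum_le1.
rewrite pairwise_cons; apply/andP; split.
  apply/allP => y ys; apply/asboolP; rewrite /porth /Ale /pperp.
  have -> : 1 - y - x = 1 - (x + \sum_(z <- s) z) + \sum_(z <- rem y s) z.
    by rewrite (big_rem _ ys) /= addrA [x + y]addrC opprD addrA subrK opprD addrA.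
  by apply: (sa_posD HA) sum_le1 (pos_sum _) => z /mem_rem; exact: Ps.
apply: IH => //; apply: Ale_trans sum_le1; rewrite addrC; exact: Ale_addr.
Qed.

Lemma porth_of_sum3 x y z : Apos x -> Apos y -> Apos z -> x + y + z = 1 ->
  x ⟂ y /\ x ⟂ z /\ y ⟂ z.
Proof.
move=> Px Py Pz xyz.
have Ps : {in [:: x; y; z], forall t, Apos t}.
  by do !(apply/forall_cons; split=> //).
have : \sum_(t <- [:: x; y; z]) t <=A 1.
  by rewrite !big_cons big_nil addr0 addrA xyz; exact: Ale_refl.
move/(pairwise_porth_of_sum Ps); rewrite /= !andbT => /andP[/andP[xy xz] yz].
by do !split; apply/asboolP.
Qed.

Lemma porth_of_sum6 x1 x2 x3 x4 x5 x6 :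
  Apos x1 -> Apos x2 -> Apos x3 -> Apos x4 -> Apos x5 -> Apos x6 ->
  x1 + x2 + x3 + x4 + x5 + x6 = 1 ->
  x1 ⟂ x2 /\ x1 ⟂ x3 /\ x1 ⟂ x4 /\ x1 ⟂ x5 /\ x1 ⟂ x6 /\
  x2 ⟂ x3 /\ x2 ⟂ x4 /\ x2 ⟂ x5 /\ x2 ⟂ x6 /\
  x3 ⟂ x4 /\ x3 ⟂ x5 /\ x3 ⟂ x6 /\ x4 ⟂ x5 /\ x4 ⟂ x6 /\ x5 ⟂ x6.
Proof.
move=> P1 P2 P3 P4 P5 P6 sum1.
have Ps : {in [:: x1; x2; x3; x4; x5; x6], forall t, Apos t}.
  by do !(apply/forall_cons; split=> //).
have : \sum_(t <- [:: x1; x2; x3; x4; x5; x6]) t <=A 1.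
  by rewrite !big_cons big_nil addr0 !addrA sum1; exact: Ale_refl.
move/(pairwise_porth_of_sum Ps); rewrite /= !andbT.
case/and5P=> /and5P[? ? ? ? ?] /and4P[? ? ? ?] /and3P[? ? ?] /andP[? ?] ?.
by do !split; apply/asboolP.
Qed.

Section TwoProjections.
Variables p q : R.
Hypotheses (Hp : proj p) (Hq : proj q).

Local Notation a1 := (meet p q).
Local Notation a2 := (meet p (pperp q)).
Local Notation a3 := (meet (pperp p) q).
Local Notation a4 := (meet (pperp p) (pperp q)).
Local Notation pcomm := (meet (meet (meet (join p q) (join p (pperp q)))
  (join (pperp p) q)) (join (pperp p) (pperp q))).

Lemma pperp_pcomm : pperp pcomm = a1 + a2 + a3 + a4.
Proof.
have Hp' := proj_pperp Hp; have Hq' := proj_pperp Hq.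
have [pa1 [a1p [a1q _]]] := pmeetP Hp Hq.
have [pa2 [a2p [a2q _]]] := pmeetP Hp Hq'.
have [pa3 [a3p [a3q _]]] := pmeetP Hp' Hq.
have [pa4 [a4p [a4q _]]] := pmeetP Hp' Hq'.
have o43 : a4 ⟂ a3 := porth_sym (porth_of_le_pperp a3q a4q).
have o42 : a4 ⟂ a2 := porth_sym (porth_of_le_pperp a2p a4p).
have o41 : a4 ⟂ a1 := porth_sym (porth_of_le_pperp a1p a4p).
have o32 : a3 ⟂ a2 := porth_sym (porth_of_le_pperp a2p a3p).
have o31 : a3 ⟂ a1 := porth_sym (porth_of_le_pperp a1p a3p).
have o21 : a2 ⟂ a1 := porth_sym (porth_of_le_pperp a1q a2q).
have pa43 := proj_add pa4 pa3 o43.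
have o43_2 := porth_addl pa4 pa3 pa2 o43 o42 o32.
have pa432 := proj_add pa43 pa2 o43_2.
have o43_1 := porth_addl pa4 pa3 pa1 o43 o41 o31.
have o432_1 := porth_addl pa43 pa2 pa1 o43_2 o43_1 o21.
rewrite !pjoinE // !pperpK (pmeet_pperp_porth pa4 pa3 o43).
rewrite (pmeet_pperp_porth pa43 pa2 o43_2) (pmeet_pperp_porth pa432 pa1 o432_1).
rewrite pperpK.
by rewrite addrC [_ + a2]addrC [a4 + a3]addrC !addrA.
Qed.

Lemma add_rp_rpp :
  meet (meet p (join (pperp p) q)) (join (pperp p) (pperp q)) +
  meet (meet (pperp p) (join p q)) (join p (pperp q)) = pcomm.
Proof.
have := pmeet_pjoin_pperp (proj_pperp Hp) Hq; rewrite pperpK => ->.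
rewrite pmeet_pjoin_pperp // -[pcomm]pperpK pperp_pcomm.
by rewrite /pperp addrACA [p + _]addrCA subrr addr0 -opprD addrA.
Qed.

Lemma add_rq_rqp :
  meet (meet q (join p (pperp q))) (join (pperp p) (pperp q)) +
  meet (meet (pperp q) (join p q)) (join (pperp p) q) = pcomm.
Proof.
have := pmeet_pjoin_pperp_sym (proj_pperp Hq) Hp; rewrite pperpK => ->.
rewrite pmeet_pjoin_pperp_sym // -[pcomm]pperpK pperp_pcomm.
by rewrite /pperp addrACA [q + _]addrCA subrr addr0 -opprD addrACA addrA.
Qed.

End TwoProjections.

End SynapticProjections.

Theorem theorem3p6 (K : realType) (R : algType K) (A Apos : set R)
  (HA : synaptic_algebra A Apos) (p q : R) (Hp : proj A p) (Hq : proj A q) :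
  let meet := pmeet A Apos in
  let join := pjoin A Apos in
  let pp := pperp p in
  let qp := pperp q in
  let orth := porth Apos in
  let r_p := meet (meet p (join pp q)) (join pp qp) in
  let r_pp := meet (meet pp (join p q)) (join p qp) in
  let r_q := meet (meet q (join p qp)) (join pp qp) in
  let r_qp := meet (meet qp (join p q)) (join pp q) in
  let pq := meet (meet (meet (join p q) (join p qp)) (join pp q)) (join pp qp) in
  let a1 := meet p q in
  let a2 := meet p qp in
  let a3 := meet pp q in
  let a4 := meet pp qp in
  (* (i) *)
  (orth r_p r_pp /\ orth r_q r_qp) /\
  (* (ii) *)
  ((orth a1 a2 /\ orth a1 a3 /\ orth a1 a4 /\ orth a1 r_p /\ orth a1 r_pp /\
       orth a2 a3 /\ orth a2 a4 /\ orth a2 r_p /\ orth a2 r_pp /\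
       orth a3 a4 /\ orth a3 r_p /\ orth a3 r_pp /\ orth a4 r_p /\ orth a4 r_pp /\ orth r_p r_pp) /\
   1 = a1 + a2 + a3 + a4 + r_p + r_pp /\
   (orth (pperp pq) r_p /\ orth (pperp pq) r_pp /\ orth r_p r_pp) /\
   1 = pperp pq + r_p + r_pp) /\
  (* (iii) *)
  ((orth a1 a2 /\ orth a1 a3 /\ orth a1 a4 /\ orth a1 r_q /\ orth a1 r_qp /\
       orth a2 a3 /\ orth a2 a4 /\ orth a2 r_q /\ orth a2 r_qp /\
       orth a3 a4 /\ orth a3 r_q /\ orth a3 r_qp /\ orth a4 r_q /\ orth a4 r_qp /\ orth r_q r_qp) /\
   1 = a1 + a2 + a3 + a4 + r_q + r_qp /\
   (orth (pperp pq) r_q /\ orth (pperp pq) r_qp /\ orth r_q r_qp) /\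
   1 = pperp pq + r_q + r_qp) /\
  (* (iv) *)
  (r_p + r_pp = r_q + r_qp /\ r_q + r_qp = pq).
Proof.
move=> meet join pp qp orth r_p r_pp r_q r_qp pq a1 a2 a3 a4.
have pos x y : Apos (meet x y) := proj_pos HA (proj_pmeet HA x y).
have pos_pq' : Apos (pperp pq) := proj_pos HA (proj_pperp HA (proj_pmeet HA _ _)).
have pq'E : pperp pq = a1 + a2 + a3 + a4 := pperp_pcomm HA Hp Hq.
have rpE : r_p + r_pp = pq := add_rp_rpp HA Hp Hq.
have rqE : r_q + r_qp = pq := add_rq_rqp HA Hp Hq.
have sum3p : 1 = pperp pq + r_p + r_pp by rewrite -addrA rpE /pperp subrK.
have sum3q : 1 = pperp pq + r_q + r_qp by rewrite -addrA rqE /pperp subrK.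
have sum6p : 1 = a1 + a2 + a3 + a4 + r_p + r_pp by rewrite -pq'E.
have sum6q : 1 = a1 + a2 + a3 + a4 + r_q + r_qp by rewrite -pq'E.
have O3p := porth_of_sum3 HA pos_pq' (pos _ _) (pos _ _) (esym sum3p).
have O3q := porth_of_sum3 HA pos_pq' (pos _ _) (pos _ _) (esym sum3q).
have O6p := porth_of_sum6 HA (pos _ _) (pos _ _) (pos _ _) (pos _ _) (pos _ _)
  (pos _ _) (esym sum6p).
have O6q := porth_of_sum6 HA (pos _ _) (pos _ _) (pos _ _) (pos _ _) (pos _ _)
  (pos _ _) (esym sum6q).
split; first by split; [case: O3p => _ [] | case: O3q => _ []].
split; first by split; last split; last split.
split; first by split; last split; last split.
by split; [rewrite rpE rqE | exact: rqE].
Qed.
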